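(* Let $\ast$ be a continuous $t$-norm and let $\{(X_n,M_n,\ast)\}_{n\in\mathbb N}$ be a sequence of nonempty compact non-Archimedean fuzzy metric spaces satisfying: (1) $\ast$ satisfies (TN1); (2) there exists a nondecreasing left-continuous function $C:(0,\infty)\to(0,1]$ with $0<C(s)\le\mathrm{diam}_s(X_n)$ for all $s>0$ and all $n\in\mathbb N$; (3) for every $t>0$ and $0<\varepsilon<1$ there is $N(\varepsilon,t)\in\mathbb N$ with $\mathrm{Cov}(X_n,\varepsilon,t)\le N(\varepsilon,t)$ for all $n$; (4) for every $t>0$ and $0<\varepsilon<1$, with $N=N(\varepsilon,t)$, there exist, for each $n$, a $(t,\varepsilon)$-net $\{x_i^n\}_{i=1}^N$ in $X_n$ such that for all $n,m\in\mathbb N$, all $s>t$ and all $i,j\in\{1,\dots,N\}$: if $M_n(x_i^n,x_j^n,s)<M_m(x_i^m,x_j^m,s)$ then $$\frac{M_n(x_i^n,x_j^n,s)}{M_m(x_i^m,x_j^m,s)\ast(1-\varepsilon)}\ge\frac{M_n(x_i^n,x_j^n,t)}{M_m(x_i^m,x_j^m,t)\ast(1-\varepsilon)}.$$ Then for every $t>0$ and $0<\varepsilon<1$ there is a subsequence $\{(X_{n_k},M_{n_k},\ast)\}_{k\in\mathbb N}$ with $M_{GH}(X_{n_j},X_{n_k},t)>(1-\varepsilon)\ast(1-\varepsilon)$ for all $j,k\in\mathbb N$.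
   Context: A continuous $t$-norm is a binary operation $\ast:[0,1]\times[0,1]\to[0,1]$ which is associative, commutative, continuous, satisfies $a\ast 1=a$ for all $a$, and is monotone ($a\ast b\le c\ast d$ whenever $a\le c$, $b\le d$). Property (TN1): $a-a\ast b\ge a\ast(1-b)$ for all $a,b\in[0,1]$. A fuzzy metric space $(X,M,\ast)$ consists of a set $X$, a continuous $t$-norm $\ast$ and a map $M:X\times X\times[0,\infty)\to[0,1]$ such that for all $x,y,z\in X$ and $t,s>0$: (KM1) $M(x,y,0)=0$; (KM2) $M(x,y,t)=1$ for all $t>0$ iff $x=y$; (KM3) $M(x,y,t)=M(y,x,t)$; (KM4) $M(x,y,t)\ast M(y,z,s)\le M(x,z,t+s)$; (KM5) $M(x,y,\cdot):[0,\infty)\to[0,1]$ is left continuous. It is non-Archimedean if moreover $M(x,z,\max\{t,s\})\ge M(x,y,t)\ast M(y,z,s)$ for all $x,y,z\in X$, $t,s>0$. The balls are $B(x,\varepsilon,t)=\{y: M(x,y,t)>1-\varepsilon\}$ ($0<\varepsilon<1$, $t>0$); they generate the topology, and ''compact'' refers to it. For nonempty compact $A,B\subseteq X$: $H_M(A,B,t)=\min\{\inf_{a\in A}\sup_{b\in B}M(a,b,t),\ \inf_{b\in B}\sup_{a\in A}M(a,b,t)\}$. A fuzzy metric on the disjoint union $X\sqcup Y$ is admissible if it restricts to the given fuzzy metrics on $X$ and $Y$; $M_{GH}(X,Y,t)=\sup\{H_M(X,Y,t): M$ admissible non-Archimedean fuzzy metric on $X\sqcup Y$ with $t$-norm $\ast\}$.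 A family $\{x_i\}_{i=1}^N$ in $X$ (repetitions allowed) is a $(t,\varepsilon)$-net if for each $x\in X$ there is $i$ with $M(x,x_i,t)>1-\varepsilon$. The cover number $\mathrm{Cov}(X,\varepsilon,t)$ is the minimal cardinality of a set $C\subseteq X$ with $X=\bigcup_{c\in C}B(c,\varepsilon,t)$. The $s$-diameter is $\mathrm{diam}_s(X)=\inf\{M(x,y,s): x,y\in X\}$. *)

From Stdlib Require Import Reals Lra List.
From Coquelicot Require Import Coquelicot.
Open Scope R_scope.

Definition in01 (a : R) : Prop := 0 <= a <= 1.

(* A continuous t-norm, as a binary operation on [0,1] (values outside
   [0,1]x[0,1] are irrelevant). *)
Definition cont_tnorm (T : R -> R -> R) : Prop :=
  (forall a b, in01 a -> in01 b -> in01 (T a b)) /\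
  (forall a b c, in01 a -> in01 b -> in01 c -> T a (T b c) = T (T a b) c) /\
  (forall a b, in01 a -> in01 b -> T a b = T b a) /\
  (forall a b, in01 a -> in01 b -> forall e, 0 < e -> exists d, 0 < d /\
     forall a' b', in01 a' -> in01 b' -> Rabs (a' - a) < d -> Rabs (b' - b) < d ->
       Rabs (T a' b' - T a b) < e) /\
  (forall a, in01 a -> T a 1 = a) /\
  (forall a b c d, in01 a -> in01 b -> in01 c -> in01 d -> a <= c -> b <= d ->
     T a b <= T c d).

Definition TN1 (T : R -> R -> R) : Prop :=
  forall a b, in01 a -> in01 b -> a - T a b >= T a (1 - b).

(* Fuzzy metric M : X -> X -> [0,oo) -> [0,1]; only arguments t >= 0 matter. *)
Definition fuzzy_metric {X : Type} (M : X -> X -> R -> R) (T : R -> R -> R) : Prop :=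
  (forall x y t, 0 <= t -> in01 (M x y t)) /\
  (forall x y, M x y 0 = 0) /\
  (forall x y, (forall t, 0 < t -> M x y t = 1) <-> x = y) /\
  (forall x y t, 0 < t -> M x y t = M y x t) /\
  (forall x y z t s, 0 < t -> 0 < s -> T (M x y t) (M y z s) <= M x z (t + s)) /\
  (forall x y t, 0 < t -> forall e, 0 < e -> exists d, 0 < d /\
     forall u, 0 <= u -> t - d < u -> u <= t -> Rabs (M x y u - M x y t) < e).

Definition non_archimedean {X : Type} (M : X -> X -> R -> R) (T : R -> R -> R) : Prop :=
  forall x y z t s, 0 < t -> 0 < s -> M x z (Rmax t s) >= T (M x y t) (M y z s).

Definition ball_f {X : Type} (M : X -> X -> R -> R) (x : X) (eps t : R) (y : X) : Prop :=
  M x y t > 1 - eps.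

Definition fopen {X : Type} (M : X -> X -> R -> R) (U : X -> Prop) : Prop :=
  forall x, U x -> exists eps t, 0 < eps < 1 /\ 0 < t /\
    forall y, ball_f M x eps t y -> U y.

Definition fcompact {X : Type} (M : X -> X -> R -> R) : Prop :=
  forall (I : Type) (U : I -> X -> Prop), (forall i, fopen M (U i)) ->
    (forall x, exists i, U i x) ->
    exists l : list I, forall x, exists i, In i l /\ U i x.

(* H_M(X,Y,t) for a fuzzy metric M on X + Y (disjoint union), A = X, B = Y *)
Definition H_M {X Y : Type} (M : (X + Y) -> (X + Y) -> R -> R) (t : R) : R :=
  Rmin
    (real (Glb_Rbar (fun r => exists a : X,
       r = real (Lub_Rbar (fun u => exists b : Y, u = M (inl a) (inr b) t)))))
    (real (Glb_Rbar (fun r => exists b : Y,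
       r = real (Lub_Rbar (fun u => exists a : X, u = M (inl a) (inr b) t))))).

Definition admissible {X Y : Type} (MX : X -> X -> R -> R) (MY : Y -> Y -> R -> R)
  (M : (X + Y) -> (X + Y) -> R -> R) : Prop :=
  (forall x x' t, 0 <= t -> M (inl x) (inl x') t = MX x x' t) /\
  (forall y y' t, 0 <= t -> M (inr y) (inr y') t = MY y y' t).

Definition M_GH {X Y : Type} (T : R -> R -> R) (MX : X -> X -> R -> R)
  (MY : Y -> Y -> R -> R) (t : R) : Rbar :=
  Lub_Rbar (fun h => exists M : (X + Y) -> (X + Y) -> R -> R,
    fuzzy_metric M T /\ non_archimedean M T /\ admissible MX MY M /\ h = H_M M t).

(* {x_i}_{i=0}^{N-1} is a (t,eps)-net (indices shifted to 0..N-1) *)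
Definition is_net {X : Type} (M : X -> X -> R -> R) (x : nat -> X) (N : nat) (t eps : R) : Prop :=
  forall y, exists i, (i < N)%nat /\ M y (x i) t > 1 - eps.

(* C (a finite set given by a duplicate-free list) covers X by balls *)
Definition ball_cover {X : Type} (M : X -> X -> R -> R) (C : list X) (eps t : R) : Prop :=
  forall y, exists c, In c C /\ ball_f M c eps t y.

Definition is_Cov {X : Type} (M : X -> X -> R -> R) (eps t : R) (k : nat) : Prop :=
  (exists C, NoDup C /\ length C = k /\ ball_cover M C eps t) /\
  (forall C, NoDup C -> ball_cover M C eps t -> (k <= length C)%nat).

Definition diam_s {X : Type} (M : X -> X -> R -> R) (s : R) : R :=
  real (Glb_Rbar (fun r => exists x y : X, r = M x y s)).

From Stdlib Require Import Reals Lra Lia List Rtopology ClassicalEpsilon.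
From Coquelicot Require Import Coquelicot.
Open Scope R_scope.

(* Fix t0 = t/2 and e > 0 so small that T (1-e) (1-e) > T (1-eps) (1-eps), and take the
   (t0,e)-nets x^n of (4).  By (2) all values M_n(x_i^n, x_j^n, t0) lie in [C t0, 1].
   Under (TN1) the only idempotents of T are 0 and 1, so T L (1-e) < L for L > 0; hence
   Bolzano-Weierstrass, applied to the finitely many index pairs (i,j), yields a
   subsequence along which T (M_m(x_i,x_j,t0)) (1-e) <= M_n(x_i,x_j,t0) for all n, m, and
   the ratio condition of (4) carries this to every level s > t0.  Two spaces whose nets
   are compatible in this sense are glued into a non-Archimedean fuzzy metric on X + Y by
   linking x to y through some pair x_i ~ y_i declared (1-e)-close; as both nets are
   (t0,e)-nets, the Hausdorff value of the glued metric at t is at least T (1-e) (1-e). *)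

Lemma in01_0 : in01 0. Proof. unfold in01; lra. Qed.
Lemma in01_1 : in01 1. Proof. unfold in01; lra. Qed.

Lemma Un_cv_const c : Un_cv (fun _ => c) c.
Proof. intros e He. exists O. intros. unfold Rdist. rewrite Rminus_eq_0, Rabs_R0. lra. Qed.

Lemma subseq_of_frequently (P : nat -> Prop) :
  (forall N, exists p, (N <= p)%nat /\ P p) ->
  exists phi : nat -> nat, (forall k, (phi k < phi (S k))%nat) /\ forall k, P (phi k).
Proof.
  intros H.
  set (next := fun N => proj1_sig (constructive_indefinite_description _ (H N))).
  assert (Hnext : forall N, (N <= next N)%nat /\ P (next N))
    by (intro N; exact (proj2_sig (constructive_indefinite_description _ (H N)))).
  exists (fun k => nat_rect _ (next O) (fun _ p => next (S p)) k). split.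
  - intro k. simpl. pose proof (Hnext (S (nat_rect _ (next O) (fun _ p => next (S p)) k))).
    lia.
  - intros [|k]; apply Hnext.
Qed.

Lemma strict_incr_lt (phi : nat -> nat) : (forall k, (phi k < phi (S k))%nat) ->
  forall a b, (a < b)%nat -> (phi a < phi b)%nat.
Proof. intros H a b Hab. induction Hab; [apply H|]. specialize (H m). lia. Qed.

(** * Continuous t-norms *)

Section TNorm.
Variable T : R -> R -> R.
Hypothesis HT : cont_tnorm T.

Lemma tnorm_in01 a b : in01 a -> in01 b -> in01 (T a b).
Proof. destruct HT as [h _]; auto. Qed.

Lemma tnorm_assoc a b c : in01 a -> in01 b -> in01 c -> T a (T b c) = T (T a b) c.
Proof. destruct HT as [_ [h _]]; auto. Qed.

Lemma tnorm_comm a b : in01 a -> in01 b -> T a b = T b a.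
Proof. destruct HT as [_ [_ [h _]]]; auto. Qed.

Lemma tnorm_cont a b : in01 a -> in01 b -> forall e, 0 < e -> exists d, 0 < d /\
  forall a' b', in01 a' -> in01 b' -> Rabs (a' - a) < d -> Rabs (b' - b) < d ->
    Rabs (T a' b' - T a b) < e.
Proof. destruct HT as [_ [_ [_ [h _]]]]; auto. Qed.

Lemma tnorm_1r a : in01 a -> T a 1 = a.
Proof. destruct HT as [_ [_ [_ [_ [h _]]]]]; auto. Qed.

Lemma tnorm_mono a b c d : in01 a -> in01 b -> in01 c -> in01 d -> a <= c -> b <= d ->
  T a b <= T c d.
Proof. destruct HT as [_ [_ [_ [_ [_ h]]]]]; auto. Qed.

Hint Resolve in01_0 in01_1 tnorm_in01 : core.

Lemma tnorm_1l a : in01 a -> T 1 a = a.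
Proof. intros; rewrite tnorm_comm, tnorm_1r; auto. Qed.

Lemma tnorm_ler a b : in01 a -> in01 b -> T a b <= b.
Proof.
  intros Ha Hb. rewrite <- (tnorm_1l b) at 2; auto.
  apply tnorm_mono; auto; destruct Ha; lra.
Qed.

Lemma tnorm_lel a b : in01 a -> in01 b -> T a b <= a.
Proof. intros. rewrite tnorm_comm; auto. apply tnorm_ler; auto. Qed.

Lemma tnorm_0r a : in01 a -> T a 0 = 0.
Proof.
  intros Ha. pose proof (tnorm_ler a 0 Ha in01_0).
  pose proof (tnorm_in01 a 0 Ha in01_0) as [? _]. lra.
Qed.

Lemma tnorm_0l a : in01 a -> T 0 a = 0.
Proof. intros. rewrite tnorm_comm; auto. apply tnorm_0r; auto. Qed.

Lemma tnorm_cv u v a b : Un_cv u a -> Un_cv v b ->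
  (forall n, in01 (u n)) -> (forall n, in01 (v n)) -> in01 a -> in01 b ->
  Un_cv (fun n => T (u n) (v n)) (T a b).
Proof.
  intros Hu Hv Hun Hvn Ha Hb e He.
  destruct (tnorm_cont a b Ha Hb e He) as [d [Hd Hc]].
  destruct (Hu d Hd) as [N1 HN1]. destruct (Hv d Hd) as [N2 HN2].
  exists (max N1 N2). intros n Hn. apply Hc; auto; [apply HN1 | apply HN2]; lia.
Qed.

Lemma idempotent_absorbs e w : in01 e -> T e e = e -> 0 <= w <= e -> T e w = w.
Proof.
  intros He Hee Hw.
  destruct (Req_dec w 0) as [->|Hw0]; [apply tnorm_0r; auto|].
  destruct (Req_dec w e) as [->|Hwe]; [auto|].
  assert (Hw' : 0 < w < e) by lra.
  (* Clamping into [0,1] makes [T e _] a continuous function on all of R. *)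
  set (clamp := fun x => Rmax 0 (Rmin 1 x)).
  assert (Hclamp : forall x, in01 (clamp x)).
  { intro x; unfold clamp, in01, Rmax, Rmin. repeat destruct Rle_dec; lra. }
  assert (Hlip : forall x y, Rabs (clamp x - clamp y) <= Rabs (x - y)).
  { intros x y; unfold clamp, Rmax, Rmin. repeat destruct Rle_dec;
      unfold Rabs; repeat destruct Rcase_abs; lra. }
  set (f := fun x => T e (clamp x) - w).
  assert (Hf : continuity f).
  { intro x. apply continuity_pt_locally. intro eps.
    destruct (tnorm_cont e (clamp x) He (Hclamp x) eps (cond_pos eps)) as [d [Hd Hc]].
    exists (mkposreal d Hd). intros y Hy. unfold f.
    replace (T e (clamp y) - w - (T e (clamp x) - w)) with (T e (clamp y) - T e (clamp x))
      by ring.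
    apply Hc; auto.
    - rewrite Rminus_eq_0, Rabs_R0; auto.
    - eapply Rle_lt_trans; [apply Hlip | apply Hy]. }
  destruct (IVT f 0 1 Hf) as [z [_ Hz]]; [lra | ..].
  - unfold f, clamp. rewrite Rmin_right, Rmax_left, tnorm_0r by (auto; lra). lra.
  - unfold f, clamp. rewrite Rmin_left, Rmax_right, tnorm_1r by (auto; lra). lra.
  - unfold f in Hz. replace w with (T e (clamp z)) by lra.
    rewrite tnorm_assoc, Hee; auto.
Qed.

Fixpoint tpow (u : R) (n : nat) : R :=
  match n with O => u | S n => T (tpow u n) u end.

Lemma tpow_in01 u n : in01 u -> in01 (tpow u n).
Proof. intros; induction n; simpl; auto. Qed.

Lemma tpow_cv_idempotent u : in01 u ->
  exists e, Un_cv (tpow u) e /\ in01 e /\ e <= u /\ T e e = e.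
Proof.
  intros Hu.
  assert (Hdec : Un_decreasing (tpow u)).
  { intro n. apply tnorm_lel; auto using tpow_in01. }
  destruct (decreasing_cv (tpow u) Hdec) as [e He].
  { exists 0. intros x [n ->]. pose proof (tpow_in01 u n Hu) as [? _].
    unfold opp_seq; lra. }
  assert (Heu : e <= u) by exact (decreasing_ineq _ _ Hdec He O).
  assert (He01 : in01 e).
  { split; [|destruct Hu; lra].
    apply Rle_cv_lim with (Un := fun _ => 0) (Vn := tpow u); auto using Un_cv_const.
    intro n. apply tpow_in01; auto. }
  exists e. split; [exact He|]. split; [exact He01|]. split; [exact Heu|].
  assert (Heu_fix : T e u = e).
  { apply (UL_sequence (fun n => T (tpow u n) u)).
    - apply tnorm_cv; auto using tpow_in01, Un_cv_const.
    - intros eps Heps. destruct (He eps Heps) as [N HN]. exists N. intros n Hn.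
      apply (HN (S n)). lia. }
  assert (Hepow : forall n, T e (tpow u n) = e).
  { induction n; simpl; auto. rewrite tnorm_assoc, IHn; auto using tpow_in01. }
  apply (UL_sequence (fun n => T e (tpow u n))).
  - apply tnorm_cv; auto using tpow_in01, Un_cv_const.
  - apply (Un_cv_ext (fun _ => e)); [intro n; symmetry; apply Hepow | apply Un_cv_const].
Qed.

Lemma tnorm_margin a c : a < 1 -> 0 < c <= 1 ->
  exists e, 0 < e < 1 /\ a < T (1 - e) (1 - e) /\ 0 < T c (1 - e).
Proof.
  intros Ha Hc. assert (Hc01 : in01 c) by (unfold in01; lra).
  destruct (tnorm_cont 1 1 in01_1 in01_1 (1 - a) ltac:(lra)) as [d1 [Hd1 H1]].
  destruct (tnorm_cont c 1 Hc01 in01_1 c ltac:(lra)) as [d2 [Hd2 H2]].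
  set (e := Rmin (Rmin d1 d2) 1 / 2).
  assert (He : 0 < e < 1 /\ e < d1 /\ e < d2).
  { unfold e. pose proof (Rmin_l (Rmin d1 d2) 1). pose proof (Rmin_r (Rmin d1 d2) 1).
    pose proof (Rmin_l d1 d2). pose proof (Rmin_r d1 d2).
    assert (0 < Rmin (Rmin d1 d2) 1) by (repeat apply Rmin_pos; lra). lra. }
  assert (He01 : in01 (1 - e)) by (unfold in01; lra).
  assert (Hdist : Rabs (1 - e - 1) = e) by (rewrite Rabs_left; lra).
  exists e. split; [lra|]. split.
  - specialize (H1 (1 - e) (1 - e) He01 He01 ltac:(lra) ltac:(lra)).
    rewrite tnorm_1r in H1 by auto. apply Rabs_def2 in H1. lra.
  - specialize (H2 c (1 - e) Hc01 He01 ltac:(rewrite Rminus_eq_0, Rabs_R0; lra) ltac:(lra)).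
    rewrite tnorm_1r in H2 by auto. apply Rabs_def2 in H2. lra.
Qed.

Lemma tnorm_ratio_bound k a0 b0 a b : in01 k -> in01 a -> in01 b -> in01 b0 ->
  0 < T b0 k -> b0 <= b -> T b0 k <= a0 ->
  (a < b -> a / T b k >= a0 / T b0 k) -> T k b <= a.
Proof.
  intros Hk Ha Hb Hb0 Hpos Hb0b Hb0a Hratio. rewrite tnorm_comm by auto.
  destruct (Rlt_le_dec a b) as [Hab|Hba].
  - specialize (Hratio Hab).
    assert (Hmono : T b0 k <= T b k) by (apply tnorm_mono; auto; lra).
    assert (Hge1 : 1 <= a0 / T b0 k).
    { apply (Rmult_le_reg_r (T b0 k)); [lra|]. field_simplify; lra. }
    replace a with ((a / T b k) * T b k) by (field; lra). nra.
  - pose proof (tnorm_lel b k Hb Hk). lra.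
Qed.

Hypothesis HN : TN1 T.

Lemma TN1_idempotent e : in01 e -> T e e = e -> e = 0 \/ e = 1.
Proof.
  intros He Hee.
  assert (He' : in01 (1 - e)) by (destruct He; split; lra).
  assert (Hzero : T e (1 - e) = 0).
  { pose proof (HN e e He He). pose proof (tnorm_in01 e (1 - e) He He') as [? _]. lra. }
  destruct (Rle_lt_dec (1 - e) e) as [Hle|Hlt].
  - right. rewrite idempotent_absorbs in Hzero; auto; destruct He; lra.
  - left. pose proof (tnorm_mono e e e (1 - e) He He He He' (Rle_refl _) ltac:(lra)). destruct He; lra.
Qed.

Lemma TN1_tnorm_lt b u : 0 < b <= 1 -> 0 <= u < 1 -> T b u < b.
Proof.
  intros Hb Hu.
  assert (Hb01 : in01 b) by (unfold in01; lra).
  assert (Hu01 : in01 u) by (unfold in01; lra).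
  apply Rnot_le_lt; intro Hge.
  assert (Hbu : T b u = b) by (pose proof (tnorm_lel b u Hb01 Hu01); lra).
  assert (Hbpow : forall n, T b (tpow u n) = b).
  { induction n; simpl; auto. rewrite tnorm_assoc, IHn; auto using tpow_in01. }
  destruct (tpow_cv_idempotent u Hu01) as [e [He [He01 [Heu Hee]]]].
  assert (Hbe : T b e = b).
  { apply (UL_sequence (fun n => T b (tpow u n))).
    - apply tnorm_cv; auto using tpow_in01, Un_cv_const.
    - apply (Un_cv_ext (fun _ => b)); [intro n; symmetry; apply Hbpow | apply Un_cv_const]. }
  destruct (TN1_idempotent e He01 Hee) as [->| ->]; [|lra].
  rewrite tnorm_0r in Hbe; auto; lra.
Qed.

Lemma tnorm_stable_subseq c k v : 0 < c -> 0 <= k < 1 -> (forall n, c <= v n <= 1) ->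
  exists phi : nat -> nat, (forall n, (phi n < phi (S n))%nat) /\
    forall a b, T (v (phi b)) k <= v (phi a).
Proof.
  intros Hc Hk Hv.
  destruct (Bolzano_Weierstrass v (fun x => c <= x <= 1) (compact_P3 c 1) Hv) as [L HL].
  assert (Hnear : forall r, 0 < r -> forall N, exists p, (N <= p)%nat /\ Rabs (v p - L) < r).
  { intros r Hr N. apply (HL (fun x => Rabs (x - L) < r) N).
    exists (mkposreal r Hr). intros y Hy. apply Hy. }
  assert (HL1 : c <= L <= 1).
  { split; apply Rnot_lt_le; intro Hlt.
    - destruct (Hnear (c - L) ltac:(lra) O) as [p [_ Hp]].
      apply Rabs_def2 in Hp. specialize (Hv p). lra.
    - destruct (Hnear (L - 1) ltac:(lra) O) as [p [_ Hp]].
      apply Rabs_def2 in Hp. specialize (Hv p). lra. }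
  assert (L01 : in01 L) by (unfold in01; lra).
  assert (K01 : in01 k) by (unfold in01; lra).
  pose proof (TN1_tnorm_lt L k ltac:(lra) Hk) as Hgap.
  set (gap := L - T L k).
  destruct (tnorm_cont L k L01 K01 (gap / 2) ltac:(unfold gap; lra)) as [d [Hd Hcont]].
  destruct (subseq_of_frequently (fun p => Rabs (v p - L) < Rmin d (gap / 2)))
    as [phi [Hphi Hp]].
  { apply Hnear. apply Rmin_pos; unfold gap; lra. }
  exists phi. split; auto. intros a b.
  pose proof (Rmin_l d (gap / 2)). pose proof (Rmin_r d (gap / 2)).
  pose proof (Hp a) as Ha. pose proof (Hp b) as Hb.
  assert (V01 : in01 (v (phi b))) by (specialize (Hv (phi b)); unfold in01; lra).
  specialize (Hcont (v (phi b)) k V01 K01 ltac:(lra)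
    ltac:(rewrite Rminus_eq_0, Rabs_R0; lra)).
  apply Rabs_def2 in Hcont. apply Rabs_def2 in Ha. unfold gap in *. lra.
Qed.

Lemma tnorm_stable_subseq_list {I : Type} c k (l : list I) (v : I -> nat -> R) :
  0 < c -> 0 <= k < 1 -> (forall p n, c <= v p n <= 1) ->
  exists phi : nat -> nat, (forall n, (phi n < phi (S n))%nat) /\
    forall p, In p l -> forall a b, T (v p (phi b)) k <= v p (phi a).
Proof.
  intros Hc Hk Hv. induction l as [|p l IH].
  - exists (fun n => n). split; [intro; lia | intros p []].
  - destruct IH as [phi [Hphi Hl]].
    destruct (tnorm_stable_subseq c k (fun n => v p (phi n)) Hc Hk) as [psi [Hpsi Hp]].
    { intro; apply Hv. }
    exists (fun n => phi (psi n)). split.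
    + intro n. apply strict_incr_lt; auto.
    + intros q [<-|Hq] a b; [apply Hp | apply Hl; auto].
Qed.

End TNorm.

(** * Fuzzy metrics *)

Lemma Lub_Rbar_real_ge (E : R -> Prop) v : E v -> (forall u, E u -> u <= 1) ->
  v <= real (Lub_Rbar E).
Proof.
  intros Hv Hb. destruct (Lub_Rbar_correct E) as [Hub Hlub].
  specialize (Hlub (Finite 1) Hb). specialize (Hub v Hv).
  destruct (Lub_Rbar E); simpl in *; auto; contradiction.
Qed.

Lemma Glb_Rbar_real_ge (E : R -> Prop) h : (exists r, E r) -> (forall r, E r -> h <= r) ->
  h <= real (Glb_Rbar E).
Proof.
  intros [r Hr] Hb. destruct (Glb_Rbar_correct E) as [Hlb Hglb].
  specialize (Hglb (Finite h) Hb). specialize (Hlb r Hr).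
  destruct (Glb_Rbar E); simpl in *; auto; contradiction.
Qed.

Lemma Glb_Rbar_real_le (E : R -> Prop) r : E r -> (forall u, E u -> 0 <= u) ->
  real (Glb_Rbar E) <= r.
Proof.
  intros Hr Hb. destruct (Glb_Rbar_correct E) as [Hlb Hglb].
  specialize (Hglb (Finite 0) Hb). specialize (Hlb r Hr).
  destruct (Glb_Rbar E); simpl in *; auto; contradiction.
Qed.

Section FuzzyMetric.
Variable T : R -> R -> R.
Hypothesis HT : cont_tnorm T.
Variable X : Type.
Variable M : X -> X -> R -> R.
Hypothesis HM : fuzzy_metric M T.

Lemma fm_in01 x y t : 0 <= t -> in01 (M x y t).
Proof. destruct HM as [h _]; auto. Qed.

Lemma fm_at0 x y : M x y 0 = 0.
Proof. destruct HM as [_ [h _]]; auto. Qed.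

Lemma fm_eq x y : (forall t, 0 < t -> M x y t = 1) <-> x = y.
Proof. destruct HM as [_ [_ [h _]]]; auto. Qed.

Lemma fm_refl x t : 0 < t -> M x x t = 1.
Proof. intros. apply fm_eq; auto. Qed.

Lemma fm_sym x y t : 0 < t -> M x y t = M y x t.
Proof. destruct HM as [_ [_ [_ [h _]]]]; auto. Qed.

Lemma fm_left_cont x y t : 0 < t -> forall e, 0 < e -> exists d, 0 < d /\
  forall u, 0 <= u -> t - d < u -> u <= t -> Rabs (M x y u - M x y t) < e.
Proof. destruct HM as [_ [_ [_ [_ [_ h]]]]]; auto. Qed.

Lemma diam_s_le s x y : 0 <= s -> diam_s M s <= M x y s.
Proof.
  intros Hs. apply Glb_Rbar_real_le; [exists x, y; reflexivity|].
  intros r [a [b ->]]. apply fm_in01; auto.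
Qed.

Hypothesis NA : non_archimedean M T.

Lemma fm_mono x y t s : 0 < t -> t <= s -> M x y t <= M x y s.
Proof.
  intros Ht Hts. pose proof (NA x y y t s Ht ltac:(lra)) as H.
  rewrite fm_refl, tnorm_1r, Rmax_right in H; auto; try lra. apply fm_in01; lra.
Qed.

Lemma na_le x y z t s w : 0 < t -> 0 < s -> t <= w -> s <= w ->
  T (M x y t) (M y z s) <= M x z w.
Proof.
  intros. eapply Rle_trans; [apply Rge_le, NA; auto|].
  apply fm_mono; apply Rmax_case; lra.
Qed.

End FuzzyMetric.

Lemma non_archimedean_triangle (T : R -> R -> R) (X : Type) (M : X -> X -> R -> R) :
  cont_tnorm T -> (forall x y t, 0 <= t -> in01 (M x y t)) ->
  (forall x t, 0 < t -> M x x t = 1) -> non_archimedean M T ->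
  forall x y z t s, 0 < t -> 0 < s -> T (M x y t) (M y z s) <= M x z (t + s).
Proof.
  intros HT H01 Hrefl NA x y z t s Ht Hs.
  eapply Rle_trans; [apply Rge_le, NA; auto|].
  pose proof (NA x z z (Rmax t s) (t + s) ltac:(apply Rmax_case; lra) ltac:(lra)) as H.
  rewrite Hrefl, tnorm_1r, Rmax_right in H; auto; try lra.
  - apply Rmax_case; lra.
  - apply H01. apply Rmax_case; lra.
Qed.

(** * Gluing two spaces along compatible nets *)

Lemma in_seq0 i N : In i (seq 0 N) <-> (i < N)%nat.
Proof. rewrite in_seq. lia. Qed.

Fixpoint max_list {I : Type} (f : I -> R) (l : list I) : R :=
  match l with nil => 0 | i :: l' => Rmax (f i) (max_list f l') end.

Lemma max_list_ge0 {I} (f : I -> R) l : 0 <= max_list f l.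
Proof. induction l; simpl; [lra|]. eapply Rle_trans; [apply IHl | apply Rmax_r]. Qed.

Lemma max_list_ub {I} (f : I -> R) l i : In i l -> f i <= max_list f l.
Proof.
  induction l as [|j l IH]; simpl; [intros []|]. intros [->|H]; [apply Rmax_l|].
  eapply Rle_trans; [apply IH; auto | apply Rmax_r].
Qed.

Lemma max_list_cases {I} (f : I -> R) l :
  max_list f l = 0 \/ exists i, In i l /\ max_list f l = f i.
Proof.
  induction l as [|j l IH]; simpl; auto. destruct (Rle_dec (f j) (max_list f l)).
  - rewrite Rmax_right by auto. destruct IH as [H|[i [H1 H2]]]; eauto.
  - rewrite Rmax_left by lra. eauto.
Qed.

Lemma max_list_in01 {I} (f : I -> R) l : (forall i, In i l -> in01 (f i)) -> in01 (max_list f l).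
Proof.
  induction l as [|j l IH]; simpl; intros H; [apply in01_0|].
  pose proof (H j (or_introl eq_refl)).
  assert (in01 (max_list f l)) by (apply IH; auto).
  unfold in01, Rmax in *. destruct Rle_dec; lra.
Qed.

Lemma max_list_ext {I} (f g : I -> R) l : (forall i, In i l -> f i = g i) ->
  max_list f l = max_list g l.
Proof.
  induction l as [|j l IH]; simpl; intros H; auto.
  rewrite H, IH by auto. reflexivity.
Qed.

Lemma Rabs_Rmax_sub_lt a b a' b' e : Rabs (a' - a) < e -> Rabs (b' - b) < e ->
  Rabs (Rmax a' b' - Rmax a b) < e.
Proof.
  intros H1 H2. apply Rabs_def2 in H1. apply Rabs_def2 in H2.
  apply Rabs_def1; unfold Rmax; repeat destruct Rle_dec; lra.
Qed.

Lemma max_list_left_cont {I} (F : R -> I -> R) (P : R -> Prop) l t e : 0 < e ->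
  (forall i, In i l -> exists d, 0 < d /\
     forall u, P u -> t - d < u -> u <= t -> Rabs (F u i - F t i) < e) ->
  exists d, 0 < d /\
    forall u, P u -> t - d < u -> u <= t -> Rabs (max_list (F u) l - max_list (F t) l) < e.
Proof.
  intros He H. induction l as [|i l IH]; simpl.
  - exists 1. split; [lra|]. intros. rewrite Rminus_eq_0, Rabs_R0; auto.
  - destruct (H i (or_introl eq_refl)) as [d1 [Hd1 H1]].
    destruct IH as [d2 [Hd2 H2]]; [intros; apply H; simpl; auto|].
    exists (Rmin d1 d2). split; [apply Rmin_pos; auto|]. intros u Pu Hu Hut.
    pose proof (Rmin_l d1 d2). pose proof (Rmin_r d1 d2).
    apply Rabs_Rmax_sub_lt; [apply H1 | apply H2]; auto; lra.
Qed.

Section Cross.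
Variable T : R -> R -> R.
Hypothesis HT : cont_tnorm T.
Variables X Y : Type.
Variable MX : X -> X -> R -> R.
Variable MY : Y -> Y -> R -> R.
Hypothesis HMX : fuzzy_metric MX T.
Hypothesis HMY : fuzzy_metric MY T.
Hypothesis NAX : non_archimedean MX T.
Hypothesis NAY : non_archimedean MY T.
Variables k t0 : R.
Hypothesis Hk : in01 k.
Hypothesis Ht0 : 0 < t0.
Variable N : nat.
Variable xs : nat -> X.
Variable ys : nat -> Y.

(* The point [x] is linked to [y] through a pair of net points [xs i] ~ [ys i], each such
   pair being declared [k]-close.  Below [t0] the value is [0]: the nets are only known
   to be compatible above [t0]. *)
Definition cross_term (x : X) (y : Y) (u : R) (i : nat) : R :=
  T (T (MX x (xs i) u) k) (MY (ys i) y u).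

Definition cross (x : X) (y : Y) (u : R) : R :=
  if Rlt_dec t0 u then max_list (cross_term x y u) (seq 0 N) else 0.

Ltac solve_in01 := repeat match goal with
  | |- in01 _ => assumption
  | |- in01 (T _ _) => apply (tnorm_in01 T HT)
  | |- in01 (MX _ _ _) => apply (fm_in01 T X MX HMX)
  | |- in01 (MY _ _ _) => apply (fm_in01 T Y MY HMY)
  | |- in01 k => exact Hk
  | |- in01 (max_list _ _) => apply max_list_in01; intros
  | |- in01 (cross_term _ _ _ _) => unfold cross_term
  | |- 0 <= _ => lra
  end.

Ltac tnorm_mono_tac := apply (tnorm_mono T HT); [solve_in01 .. | | ].

Lemma cross_in01 x y u : 0 <= u -> in01 (cross x y u).
Proof. intros. unfold cross; destruct Rlt_dec; [solve_in01 | apply in01_0]. Qed.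

Lemma cross_le_t0 x y u : u <= t0 -> cross x y u = 0.
Proof. intros. unfold cross; destruct Rlt_dec; auto; lra. Qed.

Lemma cross_ge0 x y u : 0 <= cross x y u.
Proof. unfold cross; destruct Rlt_dec; [apply max_list_ge0 | lra]. Qed.

Lemma cross_term_le x y u i : t0 < u -> (i < N)%nat -> cross_term x y u i <= cross x y u.
Proof.
  intros. unfold cross. destruct Rlt_dec; [|lra].
  apply max_list_ub. apply in_seq0; auto.
Qed.

Lemma cross_attained x y u : t0 < u ->
  cross x y u = 0 \/ exists i, (i < N)%nat /\ cross x y u = cross_term x y u i.
Proof.
  intros Hu. unfold cross. destruct Rlt_dec; [|lra].
  destruct (max_list_cases (cross_term x y u) (seq 0 N)) as [H|[i [Hi H]]]; auto.
  right. exists i. split; auto. apply in_seq0; auto.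
Qed.

Lemma cross_na_left x x' y t s : 0 < t -> 0 < s ->
  T (MX x x' t) (cross x' y s) <= cross x y (Rmax t s).
Proof.
  intros Ht Hs. pose proof (Rmax_l t s) as Hwt. pose proof (Rmax_r t s) as Hws.
  destruct (Rle_lt_dec s t0) as [Hs0|Hs0].
  { rewrite cross_le_t0, (tnorm_0r T HT) by (solve_in01; auto). apply cross_ge0. }
  destruct (cross_attained x' y s Hs0) as [H0|[i [Hi ->]]].
  { rewrite H0, (tnorm_0r T HT) by solve_in01. apply cross_ge0. }
  eapply Rle_trans; [|apply (cross_term_le _ _ _ i); auto; lra]. unfold cross_term.
  rewrite (tnorm_assoc T HT (MX x x' t) (T (MX x' (xs i) s) k)) by solve_in01.
  rewrite (tnorm_assoc T HT (MX x x' t) (MX x' (xs i) s) k) by solve_in01.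
  tnorm_mono_tac; [tnorm_mono_tac; [apply (na_le T HT X MX HMX NAX); lra | lra] |].
  apply (fm_mono T HT Y MY HMY NAY); lra.
Qed.

Hypothesis compat : forall i j, (i < N)%nat -> (j < N)%nat -> forall w, t0 < w ->
  T k (MY (ys i) (ys j) w) <= MX (xs i) (xs j) w.

Lemma cross_na_mid x x' y t s : 0 < t -> 0 < s ->
  T (cross x y t) (cross x' y s) <= MX x x' (Rmax t s).
Proof.
  intros Ht Hs. pose proof (Rmax_l t s) as Hwt. pose proof (Rmax_r t s) as Hws.
  set (w := Rmax t s) in *.
  assert (Hw : in01 (MX x x' w)) by solve_in01.
  destruct (Rle_lt_dec t t0) as [Ht0'|Ht0'].
  { rewrite cross_le_t0, (tnorm_0l T HT) by (auto; apply cross_in01; lra). apply Hw. }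
  destruct (Rle_lt_dec s t0) as [Hs0|Hs0].
  { rewrite (cross_le_t0 x' y s), (tnorm_0r T HT) by (auto; apply cross_in01; lra).
    apply Hw. }
  destruct (cross_attained x y t Ht0') as [H0|[i [Hi ->]]].
  { rewrite H0, (tnorm_0l T HT) by (apply cross_in01; lra). apply Hw. }
  destruct (cross_attained x' y s Hs0) as [H1|[j [Hj ->]]].
  { rewrite H1, (tnorm_0r T HT) by solve_in01. apply Hw. }
  unfold cross_term.
  set (a := MX x (xs i) t); set (b := MY (ys i) y t).
  set (c := MX x' (xs j) s); set (d := MY (ys j) y s).
  assert (Ha : in01 a) by (unfold a; solve_in01).
  assert (Hb : in01 b) by (unfold b; solve_in01).
  assert (Hc : in01 c) by (unfold c; solve_in01).
  assert (Hd : in01 d) by (unfold d; solve_in01).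
  (* Drop the second [k], then regroup as  x ~ xs i ~ xs j ~ x'  with the [Y]-part
     ys i ~ y ~ ys j carried by the compatibility of the nets. *)
  apply Rle_trans with (T (T (T a k) b) (T c d)).
  { tnorm_mono_tac; [lra | tnorm_mono_tac; [apply (tnorm_lel T HT); solve_in01 | lra]]. }
  replace (T (T (T a k) b) (T c d)) with (T a (T (T k (T b d)) c)).
  2:{ rewrite <- (tnorm_assoc T HT (T a k) b (T c d)), <- (tnorm_assoc T HT a k),
        <- (tnorm_assoc T HT k (T b d) c), <- (tnorm_assoc T HT b d c),
        (tnorm_comm T HT d c) by solve_in01. reflexivity. }
  eapply Rle_trans; [|apply (na_le T HT X MX HMX NAX x (xs i) x' t w w); lra].
  tnorm_mono_tac; [apply Rle_refl|].
  eapply Rle_trans; [|apply (na_le T HT X MX HMX NAX (xs i) (xs j) x' w s w); lra].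
  tnorm_mono_tac.
  - eapply Rle_trans; [|apply compat; auto; lra]. tnorm_mono_tac; [apply Rle_refl|].
    unfold d. rewrite (fm_sym T Y MY HMY (ys j) y s) by lra.
    apply (na_le T HT Y MY HMY NAY); lra.
  - unfold c. rewrite (fm_sym T X MX HMX x' (xs j) s) by lra. lra.
Qed.

Lemma cross_left_cont x y t : 0 < t -> forall e, 0 < e -> exists d, 0 < d /\
  forall u, 0 <= u -> t - d < u -> u <= t -> Rabs (cross x y u - cross x y t) < e.
Proof.
  intros Ht e He. destruct (Rle_lt_dec t t0) as [Htt0|Htt0].
  { exists t. split; auto. intros u Hu Hlo Hhi.
    rewrite !cross_le_t0, Rminus_eq_0, Rabs_R0 by lra. auto. }
  destruct (max_list_left_cont (fun u => cross_term x y u) (fun u => t0 < u) (seq 0 N) t e He)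
    as [d [Hd Hc]].
  { intros i _. unfold cross_term.
    destruct (tnorm_cont T HT (T (MX x (xs i) t) k) (MY (ys i) y t)
      ltac:(solve_in01) ltac:(solve_in01) e He) as [d1 [Hd1 H1]].
    destruct (tnorm_cont T HT (MX x (xs i) t) k ltac:(solve_in01) Hk d1 Hd1) as [d2 [Hd2 H2]].
    destruct (fm_left_cont T X MX HMX x (xs i) t Ht d2 Hd2) as [d3 [Hd3 H3]].
    destruct (fm_left_cont T Y MY HMY (ys i) y t Ht d1 Hd1) as [d4 [Hd4 H4]].
    exists (Rmin d3 d4). split; [apply Rmin_pos; auto|]. intros u Hu Hlo Hhi.
    pose proof (Rmin_l d3 d4). pose proof (Rmin_r d3 d4).
    apply H1; try solve_in01; [apply H2 | apply H4; lra]; try solve_in01.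
    - apply H3; lra.
    - rewrite Rminus_eq_0, Rabs_R0; auto. }
  exists (Rmin d (t - t0)). split; [apply Rmin_pos; lra|]. intros u Hu Hlo Hhi.
  pose proof (Rmin_l d (t - t0)). pose proof (Rmin_r d (t - t0)).
  unfold cross. destruct (Rlt_dec t0 u); [|lra]. destruct (Rlt_dec t0 t); [|lra].
  apply Hc; lra.
Qed.

End Cross.

Section Glue.
Variable T : R -> R -> R.
Hypothesis HT : cont_tnorm T.
Variables X Y : Type.
Variable MX : X -> X -> R -> R.
Variable MY : Y -> Y -> R -> R.
Hypothesis HMX : fuzzy_metric MX T.
Hypothesis HMY : fuzzy_metric MY T.
Hypothesis NAX : non_archimedean MX T.
Hypothesis NAY : non_archimedean MY T.
Variables k t0 : R.
Hypothesis Hk : in01 k.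
Hypothesis Ht0 : 0 < t0.
Variable N : nat.
Variable xs : nat -> X.
Variable ys : nat -> Y.
Hypothesis compatXY : forall i j, (i < N)%nat -> (j < N)%nat -> forall w, t0 < w ->
  T k (MY (ys i) (ys j) w) <= MX (xs i) (xs j) w.
Hypothesis compatYX : forall i j, (i < N)%nat -> (j < N)%nat -> forall w, t0 < w ->
  T k (MX (xs i) (xs j) w) <= MY (ys i) (ys j) w.

Local Notation crossXY := (cross T X Y MX MY k t0 N xs ys).
Local Notation crossYX := (cross T Y X MY MX k t0 N ys xs).

Lemma cross_swap x y u : crossYX y x u = crossXY x y u.
Proof.
  unfold cross. destruct Rlt_dec as [Hu|]; auto.
  apply max_list_ext. intros i _. unfold cross_term.
  rewrite (fm_sym T X MX HMX (xs i) x), (fm_sym T Y MY HMY y (ys i)) by lra.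
  assert (Ha : in01 (MX x (xs i) u)) by (apply (fm_in01 T X MX HMX); lra).
  assert (Hb : in01 (MY (ys i) y u)) by (apply (fm_in01 T Y MY HMY); lra).
  rewrite (tnorm_comm T HT (T _ k)), (tnorm_comm T HT _ k), tnorm_assoc;
    auto using tnorm_in01.
Qed.

Definition glue (p q : X + Y) (u : R) : R :=
  match p, q with
  | inl x, inl x' => MX x x' u
  | inr y, inr y' => MY y y' u
  | inl x, inr y | inr y, inl x => crossXY x y u
  end.

Lemma glue_in01 p q u : 0 <= u -> in01 (glue p q u).
Proof.
  intros Hu. destruct p, q; simpl; try apply cross_in01; auto.
  - apply (fm_in01 T X MX HMX); auto.
  - apply (fm_in01 T Y MY HMY); auto.
Qed.

Lemma glue_refl p u : 0 < u -> glue p p u = 1.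
Proof. destruct p; simpl; [apply (fm_refl T X MX HMX) | apply (fm_refl T Y MY HMY)]. Qed.

Lemma glue_non_archimedean : non_archimedean glue T.
Proof.
  intros p q r t s Ht Hs. apply Rle_ge.
  assert (Hcross : forall x y u, 0 < u -> in01 (crossXY x y u))
    by (intros; apply cross_in01; auto; lra).
  destruct p as [x|y], q as [x'|y'], r as [x''|y'']; simpl.
  - apply Rge_le, NAX; auto.
  - apply cross_na_left; auto.
  - apply cross_na_mid; auto.
  - rewrite (tnorm_comm T HT), (fm_sym T Y MY HMY y' y'' s), Rmax_comm, <- !cross_swap
      by (auto; apply (fm_in01 T Y MY HMY); lra).
    apply cross_na_left; auto.
  - rewrite (tnorm_comm T HT), (fm_sym T X MX HMX x' x'' s), Rmax_comm
      by (auto; apply (fm_in01 T X MX HMX); lra).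
    apply cross_na_left; auto.
  - rewrite <- !cross_swap. apply cross_na_mid; auto.
  - rewrite <- !cross_swap. apply cross_na_left; auto.
  - apply Rge_le, NAY; auto.
Qed.

Lemma glue_fuzzy_metric : fuzzy_metric glue T.
Proof.
  split; [|split; [|split; [|split; [|split]]]].
  - apply glue_in01.
  - intros [x|y] [x'|y']; simpl; try apply cross_le_t0; try lra.
    + apply (fm_at0 T X MX HMX).
    + apply (fm_at0 T Y MY HMY).
  - intros [x|y] [x'|y']; simpl.
    + rewrite (fm_eq T X MX HMX). split; congruence.
    + split; [intro H | discriminate]. specialize (H t0 Ht0).
      rewrite cross_le_t0 in H; lra.
    + split; [intro H | discriminate]. specialize (H t0 Ht0).
      rewrite cross_le_t0 in H; lra.
    + rewrite (fm_eq T Y MY HMY). split; congruence.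
  - intros [x|y] [x'|y'] t Ht; simpl; auto.
    + apply (fm_sym T X MX HMX); auto.
    + apply (fm_sym T Y MY HMY); auto.
  - apply (non_archimedean_triangle T); auto using glue_in01, glue_refl, glue_non_archimedean.
  - intros [x|y] [x'|y'] t Ht; simpl; try apply cross_left_cont; auto.
    + apply (fm_left_cont T X MX HMX); auto.
    + apply (fm_left_cont T Y MY HMY); auto.
Qed.

Lemma glue_admissible : admissible MX MY glue.
Proof. split; reflexivity. Qed.

Section NetBound.
Variable t : R.
Hypothesis Htt0 : t0 < t.
Hypothesis netX : forall x, exists i, (i < N)%nat /\ k <= MX x (xs i) t0.
Hypothesis netY : forall y, exists i, (i < N)%nat /\ k <= MY y (ys i) t0.

Lemma glue_cross_ge_X x : exists y, T k k <= crossXY x y t.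
Proof.
  destruct (netX x) as [i [Hi Hxi]]. exists (ys i).
  eapply Rle_trans; [|apply (cross_term_le T X Y MX MY k t0 N xs ys _ _ _ i); auto].
  unfold cross_term. rewrite (fm_refl T Y MY HMY), (tnorm_1r T HT) by
    (try lra; apply tnorm_in01; auto; apply (fm_in01 T X MX HMX); lra).
  apply (tnorm_mono T HT); auto using tnorm_in01, Rle_refl;
    try (apply (fm_in01 T X MX HMX); lra).
  eapply Rle_trans; [apply Hxi | apply (fm_mono T HT X MX HMX NAX); lra].
Qed.

Lemma glue_cross_ge_Y y : exists x, T k k <= crossXY x y t.
Proof.
  destruct (netY y) as [i [Hi Hyi]]. exists (xs i).
  eapply Rle_trans; [|apply (cross_term_le T X Y MX MY k t0 N xs ys _ _ _ i); auto].
  unfold cross_term. rewrite (fm_refl T X MX HMX), (tnorm_1l T HT) by (auto; lra).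
  rewrite (fm_sym T Y MY HMY) by lra.
  apply (tnorm_mono T HT); auto using Rle_refl;
    try (apply (fm_in01 T Y MY HMY); lra).
  eapply Rle_trans; [apply Hyi | apply (fm_mono T HT Y MY HMY NAY); lra].
Qed.

Lemma glue_H_M_ge : inhabited X -> inhabited Y -> T k k <= H_M glue t.
Proof.
  intros [x0] [y0]. unfold H_M. apply Rmin_glb.
  - apply Glb_Rbar_real_ge; [eexists; exists x0; reflexivity|].
    intros r [x ->]. destruct (glue_cross_ge_X x) as [y Hy].
    eapply Rle_trans; [apply Hy|]. apply Lub_Rbar_real_ge; [exists y; reflexivity|].
    intros u [y' ->]. apply (glue_in01 (inl x) (inr y')); lra.
  - apply Glb_Rbar_real_ge; [eexists; exists y0; reflexivity|].
    intros r [y ->]. destruct (glue_cross_ge_Y y) as [x Hx].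
    eapply Rle_trans; [apply Hx|]. apply Lub_Rbar_real_ge; [exists x; reflexivity|].
    intros u [x' ->]. apply (glue_in01 (inl x') (inr y)); lra.
Qed.

Lemma M_GH_ge_glue : inhabited X -> inhabited Y -> Rbar_le (T k k) (M_GH T MX MY t).
Proof.
  intros HX HY. unfold M_GH.
  apply Rbar_le_trans with (y := Finite (H_M glue t)); [apply glue_H_M_ge; auto|].
  apply Lub_Rbar_correct. exists glue.
  split; [apply glue_fuzzy_metric|]. split; [apply glue_non_archimedean|].
  split; [apply glue_admissible | reflexivity].
Qed.

End NetBound.
End Glue.

Section CompatibleNets.
Variable T : R -> R -> R.
Hypothesis HT : cont_tnorm T.
Hypothesis HN : TN1 T.
Variable X : nat -> Type.
Variable M : forall n, X n -> X n -> R -> R.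
Hypothesis HM : forall n, fuzzy_metric (M n) T.
Hypothesis HNA : forall n, non_archimedean (M n) T.
Variable x : forall n, nat -> X n.
Variable N : nat.
Variables t0 c k : R.
Hypothesis Ht0 : 0 < t0.
Hypothesis Hk : 0 <= k < 1.
Hypothesis Hc0 : 0 < c.
Hypothesis Hck : 0 < T c k.
Hypothesis Hlow : forall n i j, c <= M n (x n i) (x n j) t0.
Hypothesis Hratio : forall n m s i j, t0 < s -> (i < N)%nat -> (j < N)%nat ->
  M n (x n i) (x n j) s < M m (x m i) (x m j) s ->
  M n (x n i) (x n j) s / T (M m (x m i) (x m j) s) k >=
  M n (x n i) (x n j) t0 / T (M m (x m i) (x m j) t0) k.

(* Hypothesis (4) transports closeness at the single level [t0], which a subsequence
   achieves for the finitely many pairs of net indices, to every level above [t0]. *)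
Lemma compatible_nets_subseq : exists phi : nat -> nat,
  (forall n, (phi n < phi (S n))%nat) /\
  forall a b i j, (i < N)%nat -> (j < N)%nat -> forall w, t0 < w ->
    T k (M (phi b) (x (phi b) i) (x (phi b) j) w) <= M (phi a) (x (phi a) i) (x (phi a) j) w.
Proof.
  assert (HM01 : forall n i j s, 0 <= s -> in01 (M n (x n i) (x n j) s))
    by (intros; apply (fm_in01 T _ _ (HM n)); auto).
  assert (Hk01 : in01 k) by (unfold in01; lra).
  assert (Hc : 0 < c <= 1).
  { pose proof (Hlow O O O). pose proof (HM01 O O O t0 ltac:(lra)) as [_ ?]. lra. }
  destruct (tnorm_stable_subseq_list T HT HN c k (list_prod (seq 0 N) (seq 0 N))
    (fun p n => M n (x n (fst p)) (x n (snd p)) t0) ltac:(lra) Hk)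
    as [phi [Hphi Hstable]].
  { intros p n. split; [apply Hlow | apply HM01; lra]. }
  exists phi. split; auto. intros a b i j Hi Hj w Hw.
  specialize (Hstable (i, j) ltac:(apply in_prod; apply in_seq0; auto) a b). simpl in Hstable.
  apply (tnorm_ratio_bound T HT k (M (phi a) (x (phi a) i) (x (phi a) j) t0)
    (M (phi b) (x (phi b) i) (x (phi b) j) t0)); auto; try (apply HM01; lra).
  - eapply Rlt_le_trans; [apply Hck|].
    apply (tnorm_mono T HT); auto using Rle_refl;
      [unfold in01; lra | apply HM01; lra].
  - apply (fm_mono T HT _ _ (HM _) (HNA _)); lra.
Qed.

End CompatibleNets.

(* Only parts of the hypotheses are needed: compactness, the covering bound (3) and the
   monotonicity and continuity of [C] are subsumed by the nets of uniform size in (4). *)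
Theorem mainTheorem6 (T : R -> R -> R) (X : nat -> Type)
  (M : forall n, X n -> X n -> R -> R) :
  cont_tnorm T ->
  (forall n, inhabited (X n)) ->
  (forall n, fuzzy_metric (M n) T) ->
  (forall n, non_archimedean (M n) T) ->
  (forall n, fcompact (M n)) ->
  (* (1) *)
  TN1 T ->
  (* (2) *)
  (exists C : R -> R,
     (forall s s', 0 < s -> s <= s' -> C s <= C s') /\
     (forall s, 0 < s -> forall e, 0 < e -> exists d, 0 < d /\
        forall u, 0 < u -> s - d < u -> u <= s -> Rabs (C u - C s) < e) /\
     (forall s n, 0 < s -> 0 < C s /\ C s <= 1 /\ C s <= diam_s (M n) s)) ->
  (* (3) and (4), sharing the bound N(eps,t) *)
  (exists Nf : R -> R -> nat,
     (forall t eps, 0 < t -> 0 < eps < 1 ->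
        forall n, exists k, is_Cov (M n) eps t k /\ (k <= Nf eps t)%nat) /\
     (forall t eps, 0 < t -> 0 < eps < 1 ->
        exists x : forall n, nat -> X n,
          (forall n, is_net (M n) (x n) (Nf eps t) t eps) /\
          (forall n m s i j, t < s -> (i < Nf eps t)%nat -> (j < Nf eps t)%nat ->
             M n (x n i) (x n j) s < M m (x m i) (x m j) s ->
             M n (x n i) (x n j) s / T (M m (x m i) (x m j) s) (1 - eps) >=
             M n (x n i) (x n j) t / T (M m (x m i) (x m j) t) (1 - eps)))) ->
  forall t eps, 0 < t -> 0 < eps < 1 ->
    exists phi : nat -> nat, (forall k, (phi k < phi (S k))%nat) /\
      forall j k, Rbar_lt (T (1 - eps) (1 - eps)) (M_GH T (M (phi j)) (M (phi k)) t).
Proof.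
  intros HT Hinh HM HNA _ HN [C [_ [_ HC]]] [Nf [_ Hnet]] t eps Ht Heps.
  set (t0 := t / 2). assert (Ht0 : 0 < t0 < t) by (unfold t0; lra).
  destruct (HC t0 O ltac:(lra)) as [HC0 [HC1 _]].
  assert (Heps01 : in01 (1 - eps)) by (unfold in01; lra).
  destruct (tnorm_margin T HT (T (1 - eps) (1 - eps)) (C t0)) as [e [He [Hmargin HCe]]];
    [pose proof (tnorm_lel T HT _ _ Heps01 Heps01); lra | lra |].
  destruct (Hnet t0 e ltac:(lra) He) as [x [Hx Hratio]].
  destruct (compatible_nets_subseq T HT HN X M HM HNA x (Nf e t0) t0 (C t0) (1 - e))
    as [phi [Hphi Hcompat]]; auto; try lra.
  { intros n i j. eapply Rle_trans; [apply (HC t0 n); lra | apply (diam_s_le T); auto; lra]. }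
  exists phi. split; auto. intros j k.
  apply Rbar_lt_le_trans with (T (1 - e) (1 - e)); [exact Hmargin|].
  apply (M_GH_ge_glue T HT _ _ (M (phi j)) (M (phi k)) (HM _) (HM _) (HNA _) (HNA _)
    (1 - e) t0 ltac:(unfold in01; lra) ltac:(lra) (Nf e t0) (x (phi j)) (x (phi k)));
    auto; try lra; intro y.
  - destruct (Hx (phi j) y) as [i [Hi Hy]]. exists i. split; auto; lra.
  - destruct (Hx (phi k) y) as [i [Hi Hy]]. exists i. split; auto; lra.
Qed.
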